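(* Let $a,b$ be integers with $b\ge 3$ and $a\ge 3b$. Then in the circulant graph $G_{a,b}$ the vertices $u=1$, $v=\lceil b/2\rceil$ and $w=b$ form an asteroidal triple.
   Context: For integers $a\ge 2b\ge 2$, $G_{a,b}$ is the graph with vertex set $\{0,1,\ldots,a-1\}$ in which distinct $u,v$ are adjacent if and only if $u\in\{v+b,v+b+1,\ldots,v+a-b\}$ with addition modulo $a$. Three vertices $u,v,w$ of a graph $G$ form an asteroidal triple if there exist paths $P_{uv}$ (from $u$ to $v$), $P_{vw}$ and $P_{wu}$ in $G$ such that $N_G(w)\cap V(P_{uv})=\emptyset$, $N_G(u)\cap V(P_{vw})=\emptyset$ and $N_G(v)\cap V(P_{wu})=\emptyset$, where $N_G(x)$ is the neighborhood of $x$. *)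

From mathcomp Require Import all_boot.
Set Implicit Arguments. Unset Strict Implicit. Unset Printing Implicit Defensive.

(* The circulant graph G_{a,b}: vertex set {0,...,a-1} (naturals < a);
   distinct u, v adjacent iff u is in {v+b, ..., v+a-b} modulo a,
   i.e. iff (u - v) mod a lies in [b, a-b]. *)
Definition Gab_adj (a b : nat) : rel nat :=
  fun u v => [&& u < a, v < a, u != v & b <= (u + a - v) %% a <= a - b].

(* A path from x to y in the graph with adjacency relation e: a vertex
   sequence x :: p with consecutive vertices adjacent and ending at y.
   Its vertex set is x :: p. *)
Definition is_graph_path (e : rel nat) (x y : nat) (p : seq nat) : Prop :=
  path e x p /\ last x p = y.

Definition nbhd (e : rel nat) (x : nat) : pred nat := fun y => e x y.

Definition asteroidal_triple (V : pred nat) (e : rel nat) (u v w : nat) : Prop :=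
  [/\ V u, V v & V w] /\
  exists (puv pvw pwu : seq nat),
    [/\ is_graph_path e u v puv, is_graph_path e v w pvw, is_graph_path e w u pwu,
        ~~ has (nbhd e w) (u :: puv)
      & ~~ has (nbhd e u) (v :: pvw) /\ ~~ has (nbhd e v) (w :: pwu)].

From mathcomp Require Import all_boot.
From mathcomp Require Import zify.

(* Two vertices of G_{a,b} are adjacent iff their cyclic distance is at least b.
   With c = ceil(b/2), so that 2 <= c < b <= 2c, take the paths
   1 -> c+b -> c,   c -> a-b+c -> b   and   b -> 0 -> b+1 -> 1.
   Consecutive vertices are at cyclic distance at least b (a >= 3b), while
   every vertex of each path is at cyclic distance less than b from the third
   vertex of the triple (a-b+c lies b-c+1 <= c below 1, going backwards past 0,
   and b+1 lies b+1-c < b above c since c >= 2). *)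

Lemma cyclic_diffE (a x y : nat) : x < a -> y < a ->
  (x + a - y) %% a = if y <= x then x - y else x + a - y.
Proof.
move=> xa ya; case: leqP => yx.
- have -> : x + a - y = (x - y) + a by lia.
  by rewrite modnDr modn_small //; lia.
- by rewrite modn_small //; lia.
Qed.

Lemma Gab_adjE (a b x y : nat) : Gab_adj a b x y =
  [&& x < a, y < a, x != y &
   if y <= x then b <= x - y <= a - b else b <= x + a - y <= a - b].
Proof.
rewrite /Gab_adj; case: (boolP (x < a)) => xa //=; case: (boolP (y < a)) => ya //=.
by rewrite cyclic_diffE //; case: (y <= x).
Qed.

Lemma uphalf_bounds (b : nat) : 3 <= b ->
  [/\ 2 <= uphalf b, uphalf b < b & b <= (uphalf b).*2].
Proof.
rewrite uphalf_half => hb; have := odd_double_half b.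
by case: (odd b) => /= ?; split; lia.
Qed.

Theorem mainTheorem6 (a b : nat) (hb : 3 <= b) (hab : 3 * b <= a) :
  asteroidal_triple (fun x => x < a) (Gab_adj a b) 1 (uphalf b) b.
Proof.
have [c_ge2 c_ltb b_le2c] := uphalf_bounds b hb.
set c := uphalf b in c_ge2 c_ltb b_le2c *; clearbody c.
split; first by split; lia.
exists [:: c + b; c], [:: a - b + c; b], [:: 0; b + 1; 1].
rewrite /is_graph_path /nbhd; cbn [path has last].
rewrite !Gab_adjE !andbT !orbF.
by split; do ?split; do ![case: ifP => ?]; lia.
Qed.
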